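(* Let $n\ge1$ and let $\tilde d_1$ be a metric on $\mathbb R^n$ for which there exists a continuous function $f:[0,\infty)\to[0,\infty)$ with $f(1)=1$ and $\tilde d_1(ax,x)=f(|ax-x|)$ for all $x\in\mathbb R^n$ and all $a\ge0$. Then the following are equivalent: (i) $\tilde d_1=d_1$; (ii) $\mathcal C_{\tilde d_1}(P_1,P_2)=\mathcal C_{d_1}(P_1,P_2)$ for all $P_1,P_2\in\mathbb R^n$.
   Context: $|\cdot|$ is the Euclidean norm. The radial metric $d_1$ on $\mathbb R^n$ is $d_1(A,B)=|A-B|$ if $A=aB$ for some $a\in\mathbb R$, and $d_1(A,B)=|A|+|B|$ otherwise. For a metric $d$ on a set $M$ and $A,B\in M$, $\mathcal C_d(A,B)=\{X\in M:\ d(X,A)=d(X,B)+d(A,B)<+\infty\}$. *)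

From HB Require Import structures.
From mathcomp Require Import all_boot all_order all_algebra.
From mathcomp Require Import all_classical all_reals all_analysis.
Set Implicit Arguments. Unset Strict Implicit. Unset Printing Implicit Defensive.
Import Order.TTheory GRing.Theory Num.Theory.
Local Open Scope ring_scope.
Local Open Scope classical_set_scope.

Definition enorm (R : realType) (n : nat) (x : 'rV[R]_n) : R :=
  Num.sqrt (\sum_(i < n) x ord0 i ^+ 2).

Definition is_metric (R : realType) (M : Type) (d : M -> M -> R) : Prop :=
  [/\ forall x y, d x y = 0 <-> x = y,
      forall x y, d x y = d y x &
      forall x y z, d x z <= d x y + d y z].

Definition d1 (R : realType) (n : nat) (A B : 'rV[R]_n) : R :=
  if `[< exists a : R, A = a *: B >] then enorm (A - B) else enorm A + enorm B.

(* C_d(A,B) = {X : d(X,A) = d(X,B) + d(A,B) < +oo}; finiteness is automatic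
   for real-valued metrics *)
Definition Cd (R : realType) (M : Type) (d : M -> M -> R) (A B : M) : set M :=
  [set X | d X A = d X B + d A B].

From HB Require Import structures.
From mathcomp Require Import all_boot all_order all_algebra.
From mathcomp Require Import all_classical all_reals all_analysis.
From mathcomp Require Import lra.
Set Implicit Arguments. Unset Strict Implicit. Unset Printing Implicit Defensive.
Import Order.TTheory GRing.Theory Num.Theory numFieldNormedType.Exports.
Local Open Scope ring_scope.
Local Open Scope classical_set_scope.

(* For a >= 1 the points a x, x, 0 lie in this order on a ray, so a x is in
   C_{d_1}(0, x); transferring this to d~_1 gives f((a-1)|x|) + f(|x|) =
   f(a|x|), i.e. f is additive on [0, oo).  Being nonnegative, f is then
   monotone, and with f(1) = 1 it agrees with the identity on the ratios k/m,
   hence everywhere.  So d~_1(a x, x) = |a x - x| for a >= 0 and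
   d~_1(x, 0) = |x|; in all remaining cases 0 is d_1-between x and y, hence
   d~_1-between them, and d~_1(x, y) = |x| + |y| = d_1(x, y). *)

Section EuclideanNorm.
Variables (R : realType) (n : nat).
Implicit Types (x : 'rV[R]_n) (a s : R).

Lemma enormZ a x : enorm (a *: x) = `|a| * enorm x.
Proof.
rewrite /enorm; under eq_bigr => i _ do rewrite mxE exprMn.
by rewrite -mulr_sumr sqrtrM ?sqr_ge0 // sqrtr_sqr.
Qed.

Lemma enormN x : enorm (- x) = enorm x.
Proof. by rewrite -scaleN1r enormZ normrN normr1 mul1r. Qed.

Lemma enorm0 : enorm (0 : 'rV[R]_n) = 0.
Proof. by rewrite -(scale0r (0 : 'rV[R]_n)) enormZ normr0 mul0r. Qed.

Lemma enorm_ge0 x : 0 <= enorm x.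
Proof. exact: sqrtr_ge0. Qed.

Lemma enorm_const1 : enorm (const_mx 1 : 'rV[R]_n) = Num.sqrt n%:R.
Proof.
rewrite /enorm; under eq_bigr => i _ do rewrite mxE expr1n.
by rewrite sumr_const card_ord.
Qed.

Lemma exists_enorm s : (0 < n)%N -> 0 <= s -> exists x, enorm x = s.
Proof.
move=> n_gt0 s_ge0; set c : 'rV[R]_n := const_mx 1.
have c_gt0 : 0 < enorm c by rewrite enorm_const1 sqrtr_gt0 ltr0n.
exists ((s / enorm c) *: c).
by rewrite enormZ ger0_norm ?divr_ge0 ?(ltW c_gt0) // divfK ?gt_eqF.
Qed.

End EuclideanNorm.

Section RadialMetric.
Variables (R : realType) (n : nat).
Implicit Types (x y : 'rV[R]_n) (a : R).

Lemma d1_scale x y a : x = a *: y -> d1 x y = enorm (x - y).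
Proof. by move=> xy; rewrite /d1; case: asboolP => // -[]; exists a. Qed.

Lemma d1_ncoll x y : (forall a, x <> a *: y) -> d1 x y = enorm x + enorm y.
Proof. by move=> ncoll; rewrite /d1; case: asboolP => // -[a /ncoll]. Qed.

Lemma d1_x0 x : d1 x 0 = enorm x.
Proof.
have [->|x_neq0] := eqVneq x 0.
  by rewrite (@d1_scale _ _ 0) ?scaler0 // subr0.
by rewrite d1_ncoll ?enorm0 ?addr0 // => a; rewrite scaler0; exact/eqP.
Qed.

Lemma d1_0x x : d1 0 x = enorm x.
Proof. by rewrite (@d1_scale _ _ 0) ?scale0r // sub0r enormN. Qed.

Lemma d1_through0 x y :
  (forall a, 0 <= a -> x <> a *: y) -> d1 x y = enorm x + enorm y.
Proof.
move=> nray; have [[a xy]|ncoll] := pselect (exists a, x = a *: y); last first.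
  by apply: d1_ncoll => a xy; apply: ncoll; exists a.
have a_lt0 : a < 0 by rewrite ltNge; apply/negP => /nray.
rewrite (d1_scale xy) xy -{2}(scale1r y) -scalerBl !enormZ.
have a1_lt0 : a - 1 < 0 by rewrite subr_lt0 (lt_trans a_lt0 ltr01).
by rewrite (ltr0_norm a_lt0) (ltr0_norm a1_lt0) opprB mulrBl mul1r mulNr addrC.
Qed.

End RadialMetric.

Lemma natr_ratio_bracket (R : archiRealFieldType) (t e : R) :
  0 <= t -> 0 < e -> exists k m : nat,
    [/\ (0 < m)%N, m%:R^-1 < e & k%:R / m%:R <= t < k.+1%:R / m%:R].
Proof.
move=> t_ge0 e_gt0; pose m := (Num.truncn e^-1).+1.
have m_gt0 : (0 : R) < m%:R by rewrite ltr0n.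
exists (Num.truncn (t * m%:R)), m; split=> //.
  by rewrite -[e]invrK ltf_pV2 ?posrE ?invr_gt0 // truncnS_gt.
have /andP[lo hi] := truncn_itv (mulr_ge0 t_ge0 (ltW m_gt0)).
by rewrite ler_pdivrMr // ltr_pdivlMr // lo hi.
Qed.

Section NonnegAdditive.
Variables (R : realType) (f : R -> R).
Hypothesis f_add : forall u s, 0 <= u -> 0 < s -> f (u + s) = f u + f s.
Hypothesis f_ge0 : forall t, 0 <= t -> 0 <= f t.
Hypothesis f1 : f 1 = 1.

Let f0 : f 0 = 0.
Proof. have := f_add (lexx 0) ltr01; rewrite add0r f1; lra. Qed.

Let f_nondecreasing u v : 0 <= u -> u <= v -> f u <= f v.
Proof.
move=> u_ge0; rewrite le_eqVlt => /predU1P[-> //|uv].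
by rewrite -(subrKC u v) f_add ?subr_gt0 // lerDl f_ge0 // subr_ge0 ltW.
Qed.

Let f_natrM (k : nat) s : 0 < s -> f (k%:R * s) = k%:R * f s.
Proof.
move=> s_gt0; elim: k => [|k IH]; first by rewrite !mul0r f0.
by rewrite -addn1 natrD !mulrDl !mul1r f_add ?IH // mulr_ge0 // ltW.
Qed.

Let f_ratio (k m : nat) : (0 < m)%N -> f (k%:R / m%:R) = k%:R / m%:R.
Proof.
move=> m_gt0; have m_neq0 : (m%:R : R) != 0 by rewrite pnatr_eq0 -lt0n.
have f_inv : f m%:R^-1 = m%:R^-1.
  apply: (mulfI m_neq0); rewrite -f_natrM ?invr_gt0 ?ltr0n //.
  by rewrite mulfV.
by rewrite f_natrM ?f_inv // invr_gt0 ltr0n.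
Qed.

Lemma nonneg_additive_id t : 0 <= t -> f t = t.
Proof.
move=> t_ge0; apply/le_anti/andP; split; apply/ler_addgt0Pr => e e_gt0;
  have [k [m [m_gt0 me /andP[lo hi]]]] := natr_ratio_bracket t_ge0 e_gt0;
  have kS : k.+1%:R / m%:R = k%:R / m%:R + m%:R^-1 :> R
    by rewrite -addn1 natrD mulrDl mul1r.
- have := f_nondecreasing t_ge0 (ltW hi); rewrite f_ratio // kS; lra.
- have := f_nondecreasing (divr_ge0 (ler0n _ _) (ler0n _ _)) lo.
  rewrite f_ratio //; lra.
Qed.

End NonnegAdditive.

Section RadialDetermination.
Variables (R : realType) (n : nat) (dt : 'rV[R]_n -> 'rV[R]_n -> R) (f : R -> R).
Hypothesis n_gt0 : (0 < n)%N.
Hypothesis dt_metric : is_metric dt.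
Hypothesis f_ge0 : forall t, 0 <= t -> 0 <= f t.
Hypothesis f1 : f 1 = 1.
Hypothesis dt_ray : forall x a, 0 <= a -> dt (a *: x) x = f (enorm (a *: x - x)).
Hypothesis Cd_d1_sub : forall P1 P2, Cd (@d1 R n) P1 P2 `<=` Cd dt P1 P2.

Let dtC : forall x y, dt x y = dt y x.
Proof. by case: dt_metric. Qed.

Let dt_between X P1 P2 :
  d1 X P1 = d1 X P2 + d1 P1 P2 -> dt X P1 = dt X P2 + dt P1 P2.
Proof. exact: Cd_d1_sub. Qed.

Lemma dt_0x x : dt 0 x = f (enorm x).
Proof. by have := dt_ray x (lexx 0); rewrite scale0r sub0r enormN. Qed.

Lemma f_additive u s : 0 <= u -> 0 < s -> f (u + s) = f u + f s.
Proof.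
move=> u_ge0 s_gt0; have [x nx] := exists_enorm n_gt0 (ltW s_gt0).
pose a := (u + s) / s.
have a_ge1 : 1 <= a by rewrite ler_pdivlMr // mul1r lerDr.
have nax : enorm (a *: x) = u + s.
  by rewrite enormZ nx ger0_norm ?(le_trans ler01) // divfK ?gt_eqF.
have naxx : enorm (a *: x - x) = u.
  rewrite -{2}(scale1r x) -scalerBl enormZ nx ger0_norm ?subr_ge0 //.
  by rewrite mulrBl divfK ?gt_eqF // mul1r addrK.
have := @dt_between (a *: x) 0 x.
rewrite d1_x0 (@d1_scale _ _ _ _ a) // d1_0x nax naxx nx => /(_ erefl).
by rewrite dtC dt_0x nax dt_ray ?(le_trans ler01) // naxx dt_0x nx.
Qed.

Lemma f_eq_id t : 0 <= t -> f t = t.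
Proof. exact: nonneg_additive_id f_additive f_ge0 f1 t. Qed.

Lemma dt_x0 x : dt x 0 = enorm x.
Proof. by rewrite dtC dt_0x f_eq_id ?enorm_ge0. Qed.

Lemma dt_eq_d1 : dt = @d1 R n.
Proof.
apply/funext => x; apply/funext => y.
have [[a a_ge0 ->]|nray] := pselect (exists2 a, 0 <= a & x = a *: y).
  by rewrite dt_ray // (@d1_scale _ _ _ _ a) // f_eq_id ?enorm_ge0.
have d1xy : d1 x y = enorm x + enorm y.
  by apply: d1_through0 => a a_ge0 xy; apply: nray; exists a.
have := @dt_between x y 0; rewrite !d1_x0 d1xy => /(_ erefl).
by rewrite !dt_x0.
Qed.

End RadialDetermination.

Theorem theorem3p2 (R : realType) (n : nat) (hn : (0 < n)%N)
  (dt : 'rV[R]_n -> 'rV[R]_n -> R) (f : R -> R) :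
  is_metric dt ->
  {within [set t : R | 0 <= t], continuous f} ->
  (forall t : R, 0 <= t -> 0 <= f t) ->
  f 1 = 1 ->
  (forall (x : 'rV[R]_n) (a : R), 0 <= a -> dt (a *: x) x = f (enorm (a *: x - x))) ->
  (dt = @d1 R n <-> forall P1 P2 : 'rV[R]_n, Cd dt P1 P2 = Cd (@d1 R n) P1 P2).
Proof.
move=> dt_metric _ f_ge0 f1 dt_ray; split=> [-> // | Cd_eq].
apply: (dt_eq_d1 hn dt_metric f_ge0 f1 dt_ray) => P1 P2.
by rewrite Cd_eq.
Qed.
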